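(* Let $N\ge1$, $\lambda,\mu\in\mathbb{K}$, $\mu\ne0$. The Lie algebra $\mathfrak{g}^{(2)}(N,\lambda,\mu)_+$ is isomorphic to $V^{\oplus N}\rtimes\mathfrak{g}_0$, where $\mathfrak{g}_0$ is the one-dimensional abelian Lie algebra spanned by $z$ and $V$ is the right $\mathfrak{g}_0$-module with basis $(f_i)_{i\ge0}$ and action $f_i.z=f_{i+1}$.
   Context: Base field $\mathbb{K}$ of characteristic zero. $\mathfrak{g}^{(2)}(N,\lambda,\mu)$ is $\mathbb{K}[X]$ with the preLie product $X^i\bullet X^j=i\lambda X^i$ if $j=0$, $i\mu X^{i+N}$ if $j=N$, and $0$ otherwise. $\mathfrak{g}^{(2)}(N,\lambda,\mu)_+$ denotes $\mathbb{K}[X]_+=\mathrm{Vect}(X^i,i\ge1)$ with bracket $[P,Q]=P\bullet Q-Q\bullet P$. For a Lie algebra $\mathfrak{g}$ and a right $\mathfrak{g}$-module $M$, $M\rtimes\mathfrak{g}$ is $M\oplus\mathfrak{g}$ with $M$ abelian, $[m,x]=m.x$ for $m\in M$, $x\in\mathfrak{g}$, and the bracket of $\mathfrak{g}$ on $\mathfrak{g}$. *)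

From HB Require Import structures.
From mathcomp Require Import all_boot all_order all_algebra.
Set Implicit Arguments. Unset Strict Implicit. Unset Printing Implicit Defensive.
Import Order.TTheory GRing.Theory Num.Theory.
Local Open Scope ring_scope.

Definition g2_basis (K : fieldType) (N : nat) (lam mu : K) (i j : nat) : {poly K} :=
  if j == 0%N then (i%:R * lam) *: 'X^i
  else if j == N then (i%:R * mu) *: 'X^(i + N)
  else 0.

Definition g2_prod (K : fieldType) (N : nat) (lam mu : K) (P Q : {poly K}) : {poly K} :=
  \sum_(i < size P) \sum_(j < size Q) (P`_i * Q`_j) *: g2_basis N lam mu i j.

Definition g2_bracket (K : fieldType) (N : nat) (lam mu : K) (P Q : {poly K}) : {poly K} :=
  g2_prod N lam mu P Q - g2_prod N lam mu Q P.

Definition in_plus (K : fieldType) (P : {poly K}) : Prop := P`_0 = 0.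

(* V is realised as K[t] with basis f_i := t^i ('X^i);
   V^{(+)N} as {ffun 'I_N -> {poly K}};
   g_0 = K z, an element c z being represented by c : K.
   Right action: f_i . z = f_{i+1}, i.e. m . (c z) = c t m, componentwise. *)
Definition Vsum (K : fieldType) (N : nat) := {ffun 'I_N -> {poly K}}.

Definition V_act (K : fieldType) (N : nat) (m : Vsum K N) (c : K) : Vsum K N :=
  [ffun k => c *: ('X * m k)].

Definition SD (K : fieldType) (N : nat) : Type := (Vsum K N * K)%type.

Definition SD_add (K : fieldType) (N : nat) (u v : SD K N) : SD K N :=
  (u.1 + v.1, u.2 + v.2).
Definition SD_scale (K : fieldType) (N : nat) (a : K) (u : SD K N) : SD K N :=
  (a *: u.1, a * u.2).

(* [(m,x),(m',x')] = [m,m'] + [m,x'] + [x,m'] + [x,x']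
                   = 0 + m.x' - m'.x + 0   (M abelian, g_0 abelian) *)
Definition SD_bracket (K : fieldType) (N : nat) (u v : SD K N) : SD K N :=
  (V_act u.1 v.2 - V_act v.1 u.2, 0).

From HB Require Import structures.
From mathcomp Require Import all_boot all_order all_algebra.
From mathcomp Require Import ring zify.
Import GRing.Theory.
Set Implicit Arguments.
Local Open Scope ring_scope.

(** For P, Q in K[X]_+ only the terms with j = N survive in P • Q, and
    [P, Q] = mu X^N (Q_N euler P - P_N euler Q), where euler = X d/dX.
    Hence the monomials X^m, m <> 0, N, span an abelian ideal on which z := X^N / mu acts by
    X^m |-> m X^(m+N).  Grouping them by m mod N gives N chains
    X^k, X^(k+N), X^(k+2N), ... (0 < k < N) and X^(2N), X^(3N), ...; if e_l is
    the l-th exponent of a chain, f_l := (e_0 ... e_(l-1)) X^(e_l) satisfies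
    f_l . z = f_(l+1), and the products are nonzero in characteristic 0. *)

Section ChainIndex.
Local Open Scope nat_scope.
Variable N : nat.

(* The chain of multiples of N starts at 2N: X^N itself is z. *)
Definition chain_exp (k l : nat) : nat := if k == 0 then (l + 2) * N else k + l * N.

Definition chain_pos (m : nat) : nat := if m %% N == 0 then m %/ N - 2 else m %/ N.

Lemma chain_expS k l : chain_exp k l.+1 = chain_exp k l + N.
Proof. by rewrite /chain_exp; case: ifP => _; rewrite ?addSn mulSnr ?addnA. Qed.

Lemma chain_exp_le k l : k < N -> chain_exp k l <= (l + 2) * N.
Proof. rewrite /chain_exp; case: ifP => _; nia. Qed.

Lemma chain_exp_neqN k l : k < N -> chain_exp k l != N.
Proof. rewrite /chain_exp; case: ifP => /eqP; case: l; nia. Qed.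

Lemma chain_exp_modn k l : k < N -> chain_exp k l %% N = k.
Proof.
rewrite /chain_exp; case: ifP => [/eqP -> | _ ltkN]; first by rewrite modnMl.
by rewrite addnC modnMDl modn_small.
Qed.

Hypothesis N_gt0 : 0 < N.

Lemma chain_exp_gt0 k l : 0 < chain_exp k l.
Proof. rewrite /chain_exp; case: ifP => /eqP; nia. Qed.

Lemma chain_exp_ge k l : l <= chain_exp k l.
Proof. rewrite /chain_exp; case: ifP => _; nia. Qed.

Lemma chain_posK k l : k < N -> chain_pos (chain_exp k l) = l.
Proof.
move=> ltkN; rewrite /chain_pos chain_exp_modn // /chain_exp.
case: eqP => _; first by rewrite mulnK // addnK.
by rewrite addnC divnMDl // divn_small ?addn0.
Qed.

Lemma chain_expK m : 0 < m -> m != N -> chain_exp (m %% N) (chain_pos m) = m.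
Proof.
move=> m_gt0 m_neqN; have em := divn_eq m N; rewrite /chain_exp /chain_pos.
have [m0 | m_ndvd] := eqVneq (m %% N) 0; last by lia.
rewrite m0 addn0 in em; move: em; case: (m %/ N) => [|[|q]] em; nia.
Qed.

End ChainIndex.

Section SumSupport.
Variable V : zmodType.

Lemma sum_supp2 (F : nat -> V) a b n : a != b ->
    (forall j, j != a -> j != b -> F j = 0) ->
  \sum_(j < n) F j = (if (a < n)%N then F a else 0) + (if (b < n)%N then F b else 0).
Proof.
move=> neq_ab F_supp; elim: n => [|n IHn]; first by rewrite big_ord0 addr0.
have ltnS_eqVlt x : (x < n.+1)%N = (x == n) || (x < n)%N by rewrite ltnS leq_eqVlt.
rewrite big_ord_recr /= IHn !ltnS_eqVlt.
have [-> | n_neq_a] := eqVneq n a.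
  by rewrite ltnn [b == a]eq_sym (negPf neq_ab) /= add0r addrC.
have [-> | n_neq_b] := eqVneq n b; first by rewrite ltnn /= addr0.
by rewrite (F_supp n) // addr0.
Qed.

End SumSupport.

Section Bracket.
Variables (K : fieldType) (N : nat) (lam mu : K).
Hypothesis N_gt0 : (0 < N)%N.

Definition euler (P : {poly K}) : {poly K} := \poly_(i < size P) (i%:R * P`_i).

Lemma coef_euler P i : (euler P)`_i = i%:R * P`_i.
Proof.
rewrite coef_poly; case: ltnP => // le_sizeP_i.
by rewrite nth_default ?mulr0.
Qed.

Lemma g2_prodE P Q :
  g2_prod N lam mu P Q = (Q`_0 * lam) *: euler P + (Q`_N * mu) *: (euler P * 'X^N).
Proof.
have N_neq0 : N != 0%N by rewrite -lt0n.
have coef_ifE c k (x : {poly K}) :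
    (if (k < size Q)%N then (c * Q`_k) *: x else 0) = (c * Q`_k) *: x.
  by case: ltnP => // ?; rewrite nth_default ?mulr0 ?scale0r.
rewrite /g2_prod /euler poly_def mulr_suml !scaler_sumr -big_split /=.
apply: eq_bigr => i _.
rewrite (@sum_supp2 _ (fun j => (P`_i * Q`_j) *: g2_basis N lam mu i j) 0 N); first last.
- by move=> j /negPf j_neq0 /negPf j_neqN; rewrite /g2_basis j_neq0 j_neqN scaler0.
- by rewrite eq_sym.
rewrite !coef_ifE /g2_basis eqxx (negPf N_neq0) eqxx exprD -!scalerAl !scalerA.
by congr (_ *: _ + _ *: _); ring.
Qed.

Lemma g2_bracketE P Q : in_plus P -> in_plus Q ->
  g2_bracket N lam mu P Q = mu *: ((Q`_N *: euler P - P`_N *: euler Q) * 'X^N).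
Proof.
rewrite /in_plus /g2_bracket !g2_prodE => -> ->.
rewrite !mul0r !scale0r !add0r mulrBl -!scalerAl scalerBr !scalerA.
by rewrite [Q`_N * _]mulrC [P`_N * _]mulrC.
Qed.

Lemma coef_g2_bracket_lt P Q m : in_plus P -> in_plus Q -> (m < N)%N ->
  (g2_bracket N lam mu P Q)`_m = 0.
Proof. by move=> P0 Q0 lt_mN; rewrite g2_bracketE // coefZ coefMXn lt_mN mulr0. Qed.

Lemma coef_g2_bracket_addN P Q m : in_plus P -> in_plus Q ->
  (g2_bracket N lam mu P Q)`_(m + N) = mu * m%:R * (Q`_N * P`_m - P`_N * Q`_m).
Proof.
move=> P0 Q0; rewrite g2_bracketE // coefZ coefMXn ltnNge leq_addl /= addnK.
by rewrite coefB !coefZ !coef_euler; ring.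
Qed.

End Bracket.

Section Isomorphism.
Variables (K : fieldType) (N : nat) (mu : K).
Hypotheses (charK0 : [pchar K] =i pred0) (N_gt0 : (0 < N)%N) (mu_neq0 : mu != 0).

Lemma char0_natr_eq0 n : (n%:R == 0 :> K) = (n == 0%N).
Proof. by move: n; apply/(pcharf0P K). Qed.

Definition chain_scale (k l : nat) : K := ((\prod_(i < l) chain_exp N k i)%N%:R)^-1.

Lemma chain_scale_neq0 k l : chain_scale k l != 0.
Proof.
rewrite invr_eq0 char0_natr_eq0 -lt0n prodn_gt0 // => i.
exact: chain_exp_gt0.
Qed.

Lemma chain_scaleS k l : chain_scale k l.+1 = chain_scale k l / (chain_exp N k l)%:R.
Proof. by rewrite /chain_scale big_ord_recr natrM invfM. Qed.

Definition chain_part (P : {poly K}) (k : nat) : {poly K} :=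
  \poly_(l < size P) (P`_(chain_exp N k l) * chain_scale k l).

Lemma coef_chain_part P k l : (chain_part P k)`_l = P`_(chain_exp N k l) * chain_scale k l.
Proof.
rewrite coef_poly; case: ltnP => // le_sizeP_l.
by rewrite nth_default ?mul0r // (leq_trans le_sizeP_l) ?chain_exp_ge.
Qed.

Definition to_sd (P : {poly K}) : SD K N := ([ffun k : 'I_N => chain_part P k], mu * P`_N).

Definition chain_ord (m : nat) : 'I_N := Ordinal (ltn_pmod m N_gt0).

Definition of_sd (w : SD K N) : {poly K} :=
  \poly_(m < ((\max_k size (w.1 k)) + 2) * N)
    (if m == N then w.2 / mu
     else if m == 0%N then 0
     else (w.1 (chain_ord m))`_(chain_pos N m) / chain_scale (chain_ord m) (chain_pos N m)).

Lemma to_sd_linear a P Q : to_sd (a *: P + Q) = SD_add (SD_scale a (to_sd P)) (to_sd Q).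
Proof.
rewrite /to_sd /SD_add /SD_scale /=; congr (_, _); last by rewrite coefD coefZ; ring.
apply/ffunP => k; apply/polyP => l.
by rewrite !ffunE coefD coefZ !coef_chain_part coefD coefZ; ring.
Qed.

Lemma to_sd_inj P Q : in_plus P -> in_plus Q -> to_sd P = to_sd Q -> P = Q.
Proof.
move=> P0 Q0 eqPQ; apply/polyP => m.
have [-> | m_neq0] := eqVneq m 0%N; first by rewrite P0 Q0.
have [-> | m_neqN] := eqVneq m N; first exact/(mulfI mu_neq0)/(congr1 snd eqPQ).
have := congr1 (fun w : SD K N => (w.1 (chain_ord m))`_(chain_pos N m)) eqPQ.
have m_gt0 : (0 < m)%N by rewrite lt0n.
rewrite /= !ffunE !coef_chain_part chain_expK //.
exact/mulIf/chain_scale_neq0.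
Qed.

Lemma of_sd_plus w : in_plus (of_sd w).
Proof.
rewrite /in_plus coef_poly; case: ifP => // _.
by rewrite [_ == N]eq_sym eqn0Ngt N_gt0.
Qed.

Lemma of_sdK w : to_sd (of_sd w) = w.
Proof.
case: w => f x; rewrite /to_sd /of_sd; congr (_, _); last first.
  have lt_N_B : (N < (\max_k size (f k) + 2) * N)%N by nia.
  by rewrite coef_poly lt_N_B eqxx mulrCA divff ?mulr1.
apply/ffunP => k; apply/polyP => l; rewrite ffunE coef_chain_part coef_poly /=.
have ltkN := ltn_ord k.
case: ltnP => [_ | le_B].
  have chain_ordK : chain_ord (chain_exp N k l) = k.
    by apply: val_inj; rewrite /= chain_exp_modn.
  rewrite (negPf (chain_exp_neqN _ _ l ltkN)) ifN -?lt0n ?chain_exp_gt0 //.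
  by rewrite chain_ordK chain_exp_modn // chain_posK // divfK ?chain_scale_neq0.
rewrite mul0r nth_default // leqNgt; apply: contraTN le_B => lt_l_size.
rewrite -ltnNge (leq_ltn_trans (chain_exp_le _ _ l ltkN)) // ltn_pmul2r // ltn_add2r.
exact: leq_trans lt_l_size (leq_bigmax_cond _ _).
Qed.

Lemma to_sd_bracket lam P Q : in_plus P -> in_plus Q ->
  to_sd (g2_bracket N lam mu P Q) = SD_bracket (to_sd P) (to_sd Q).
Proof.
move=> P0 Q0; rewrite /SD_bracket /to_sd /=; congr (_, _); last first.
  by rewrite -[N]add0n coef_g2_bracket_addN // mulr0 mul0r mulr0.
apply/ffunP => k; apply/polyP => l.
rewrite /V_act !ffunE coefB !coefZ !coefXM !coef_chain_part.
case: l => [|l] /=.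
  rewrite !mulr0 subrr /chain_exp; have [-> | k_neq0] := eqVneq (val k) 0%N.
    by rewrite mulSn mul1n coef_g2_bracket_addN //; ring.
  by rewrite mul0n addn0 coef_g2_bracket_lt ?mul0r.
rewrite chain_expS coef_g2_bracket_addN // chain_scaleS.
by field; rewrite char0_natr_eq0 -lt0n chain_exp_gt0.
Qed.

End Isomorphism.

Theorem mainTheorem16 (K : fieldType) (charK0 : [pchar K] =i pred0)
    (N : nat) (hN : (1 <= N)%N) (lam mu : K) (hmu : mu != 0) :
  exists phi : {poly K} -> SD K N,
    (forall (a : K) (P Q : {poly K}),
        phi (a *: P + Q) = SD_add (SD_scale a (phi P)) (phi Q)) /\
    (forall P Q : {poly K}, in_plus P -> in_plus Q -> phi P = phi Q -> P = Q) /\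
    (forall w : SD K N, exists P : {poly K}, in_plus P /\ phi P = w) /\
    (forall P Q : {poly K}, in_plus P -> in_plus Q ->
        phi (g2_bracket N lam mu P Q) = SD_bracket (phi P) (phi Q)).
Proof.
exists (to_sd N mu); split; [exact: to_sd_linear | split; [|split]].
- exact: to_sd_inj.
- by move=> w; exists (of_sd mu hN w); split; [exact: of_sd_plus | exact: of_sdK].
- exact: to_sd_bracket.
Qed.
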